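(* Let $k\ge2$, let $\Pi\subsetneq\Sigma_k$ be a proper subshift, and let $T:\Pi\to\Sigma_k$ be the map constructed below. If $y,\tilde y\in\Pi$ form a DC1 pair, then $T(y),T(\tilde y)$ form a DC1 pair.
   Context: $\Sigma_k=\{0,\dots,k-1\}^{\mathbb{N}}$ with metric $d(x,y)=\sum_{n\ge1}\delta(x_n,y_n)/2^n$ ($\delta(a,b)=0$ if $a=b$, $1$ otherwise) and shift $\sigma$. A subshift is a nonempty closed $\sigma$-invariant subset; a finite word is contained in $\Pi$ if it is a prefix of some point of $\Pi$. Construction of $T$: enumerate all finite words contained in $\Pi$ as $C_1,C_2,\dots$; fix a finite word $A_1$ not contained in $\Pi$; for $y\in\Pi$ let $Y_n$ be its first $n$ symbols; $B_n=C_nY_n\cdots Y_n$ ($Y_n$ repeated $|A_n|^2$ times), $A_{n+1}=A_nB_nA_n$; $T(y)$ is the point having every $A_n$ as prefix; the construction requires $|C_n|=o(|A_n|)$. With $\Phi^{(n)}_{xy}(t)=\frac1n|\{0\le i<n: d(\sigma^ix,\sigma^iy)<t\}|$, a pair $(x,y)$ is DC1 if $\liminf_n\Phi^{(n)}_{xy}(s)=0$ for some $s>0$ and $\limsup_n\Phi^{(n)}_{xy}(t)=1$ for all $t>0$. *)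

From Stdlib Require Import Reals List Arith.
From Coquelicot Require Import Coquelicot.
Open Scope R_scope.

(* Points of the full shift: sequences nat -> nat, indexed from 0
   (index i corresponds to the paper's coordinate i+1). *)
Definition pt := nat -> nat.
Definition word := list nat.

Definition in_Sigma (k : nat) (x : pt) : Prop := forall n, (x n < k)%nat.

Definition dist (x y : pt) : R :=
  Series (fun n => if Nat.eq_dec (x n) (y n) then 0 else / 2 ^ (S n)).

Definition shift (x : pt) : pt := fun n => x (S n).
Definition shift_iter (i : nat) (x : pt) : pt := Nat.iter i shift x.

Definition subshift (k : nat) (Pi : pt -> Prop) : Prop :=
  (exists x, Pi x) /\
  (forall x, Pi x -> in_Sigma k x) /\
  (forall x, in_Sigma k x ->
     (forall eps, 0 < eps -> exists z, Pi z /\ dist x z < eps) -> Pi x) /\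
  (forall x, Pi x -> Pi (shift x)).

Definition proper_subshift (k : nat) (Pi : pt -> Prop) : Prop :=
  subshift k Pi /\ exists x, in_Sigma k x /\ ~ Pi x.

Definition prefix_of (w : word) (x : pt) : Prop :=
  forall i, (i < length w)%nat -> nth i w 0%nat = x i.

Definition contained (Pi : pt -> Prop) (w : word) : Prop :=
  exists x, Pi x /\ prefix_of w x.

Definition Yw (y : pt) (n : nat) : word := map y (seq 0 n).

(* The words A_n, 0-based: Aw C A1 y n = A_{n+1}; C n = C_{n+1}.
   A_{n+1} = A_n B_n A_n, B_n = C_n Y_n ... Y_n (|A_n|^2 copies). *)
Fixpoint Aw (C : nat -> word) (A1 : word) (y : pt) (n : nat) : word :=
  match n with
  | O => A1
  | S m =>
      let a := Aw C A1 y m in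
      a ++ (C m ++ concat (repeat (Yw y (S m)) (length a ^ 2))) ++ a
  end.

Definition Phi (x y : pt) (t : R) (n : nat) : R :=
  INR (length (filter
         (fun i => if Rlt_dec (dist (shift_iter i x) (shift_iter i y)) t
                   then true else false)
         (seq 0 n))) / INR n.

Definition DC1 (x y : pt) : Prop :=
  (exists s, 0 < s /\ LimInf_seq (Phi x y s) = Finite 0) /\
  (forall t, 0 < t -> LimSup_seq (Phi x y t) = Finite 1).

(* The word A_{n+1} = A_n C_n Y_n ... Y_n A_n contains |A_n|^2 consecutive copies of
   Y_n, at a position that does not depend on y.  Along the ends E_n of these runs,
   the proportion of times at which T y and T y' agree on m consecutive symbols
   therefore equals, up to O(m/n), the proportion of times below n at which y and y'
   agree on m symbols; the prefix A_n C_n is negligible because |C_n| <= |A_n|.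
   As d(x, z) < 2^-m forces agreement on the first m symbols, and that agreement
   forces d(x, z) <= 2^-m, the functions Phi of the two pairs track each other along
   E_n, which carries over both the liminf 0 and the limsup 1 conditions. *)

From Pilot Require Import Defs.
From Stdlib Require Import Reals List Arith Lia Lra.
From Coquelicot Require Import Coquelicot.
Open Scope R_scope.

Definition dist_term (x z : pt) (n : nat) : R :=
  if Nat.eq_dec (x n) (z n) then 0 else / 2 ^ (S n).

Lemma dist_term_bounds x z n : 0 <= dist_term x z n <= (/ 2) ^ n * / 2.
Proof.
  unfold dist_term. rewrite pow_inv.
  assert (0 < / 2 ^ n) by (apply Rinv_0_lt_compat, pow_lt; lra).
  simpl. rewrite Rinv_mult.
  destruct Nat.eq_dec; split; try lra; apply Rmult_le_pos; lra.
Qed.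

Lemma is_series_geom_half : is_series (fun n => (/ 2) ^ n * / 2) 1.
Proof.
  replace 1 with (/ (1 - / 2) * / 2) by field.
  apply (is_series_scal_r (/ 2)), is_series_geom.
  rewrite Rabs_pos_eq; lra.
Qed.

Lemma ex_series_dist_term x z : ex_series (dist_term x z).
Proof.
  apply (@ex_series_le R_AbsRing R_CompleteNormedModule _ (fun n => (/ 2) ^ n * / 2)).
  - intro n. destruct (dist_term_bounds x z n).
    unfold norm; simpl; unfold abs; simpl. rewrite Rabs_pos_eq; lra.
  - eexists; apply is_series_geom_half.
Qed.

Lemma dist_bounds x z : 0 <= Defs.dist x z <= 1.
Proof.
  unfold Defs.dist. fold (dist_term x z). split.
  - replace 0 with (Series (fun n => 0 * dist_term x z n))
      by (rewrite Series_scal_l; ring).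
    apply Series_le; [|apply ex_series_dist_term].
    intro n; destruct (dist_term_bounds x z n); lra.
  - rewrite <- (is_series_unique _ _ is_series_geom_half).
    apply Series_le; [apply dist_term_bounds | eexists; apply is_series_geom_half].
Qed.

Lemma dist_shift x z : Defs.dist x z =
  (if Nat.eq_dec (x 0%nat) (z 0%nat) then 0 else / 2) + / 2 * Defs.dist (shift x) (shift z).
Proof.
  unfold Defs.dist. fold (dist_term x z). fold (dist_term (shift x) (shift z)).
  rewrite Series_incr_1 by apply ex_series_dist_term.
  rewrite <- Series_scal_l. f_equal.
  - unfold dist_term. destruct Nat.eq_dec; simpl; [reflexivity | field].
  - apply Series_ext. intro n. unfold dist_term, shift.
    destruct Nat.eq_dec; [lra|]. simpl. rewrite !Rinv_mult. ring.
Qed.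

Lemma dist_le_of_agree m : forall x z,
  (forall j, (j < m)%nat -> x j = z j) -> Defs.dist x z <= / 2 ^ m.
Proof.
  induction m as [|m IHm]; intros x z Hxz.
  - simpl. rewrite Rinv_1. apply dist_bounds.
  - rewrite dist_shift. destruct Nat.eq_dec as [_|Hne]; [|exfalso; apply Hne, Hxz; lia].
    assert (Defs.dist (shift x) (shift z) <= / 2 ^ m).
    { apply IHm. intros j Hj. apply Hxz. lia. }
    simpl. rewrite Rinv_mult. lra.
Qed.

Lemma dist_ge_of_neq j : forall x z, x j <> z j -> / 2 ^ (S j) <= Defs.dist x z.
Proof.
  induction j as [|j IHj]; intros x z Hne; rewrite dist_shift.
  - destruct Nat.eq_dec; [contradiction|].
    pose proof (dist_bounds (shift x) (shift z)). simpl. lra.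
  - specialize (IHj (shift x) (shift z) Hne).
    change (2 ^ S (S j)) with (2 * 2 ^ S j). rewrite Rinv_mult.
    destruct Nat.eq_dec; lra.
Qed.

Lemma agree_of_dist_lt m x z :
  Defs.dist x z < / 2 ^ m -> forall j, (j < m)%nat -> x j = z j.
Proof.
  intros Hd j Hj. destruct (Nat.eq_dec (x j) (z j)) as [|Hne]; [assumption|].
  pose proof (dist_ge_of_neq j x z Hne).
  assert (/ 2 ^ m <= / 2 ^ S j).
  { apply Rinv_le_contravar; [apply pow_lt; lra | apply Rle_pow; [lra | lia]]. }
  lra.
Qed.

Lemma shift_iter_apply i x j : shift_iter i x j = x (i + j)%nat.
Proof.
  revert x j; induction i as [|i IHi]; intros x j; [reflexivity|].
  unfold shift_iter in *. rewrite Nat.iter_succ_r, IHi. unfold shift. f_equal; lia.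
Qed.

Definition count_range (P : nat -> bool) (s n : nat) : nat :=
  length (filter P (seq s n)).

Lemma count_range_add P s a b :
  count_range P s (a + b) = (count_range P s a + count_range P (s + a) b)%nat.
Proof. unfold count_range. rewrite seq_app, filter_app, length_app. reflexivity. Qed.

Lemma count_range_le P s n : (count_range P s n <= n)%nat.
Proof.
  unfold count_range. rewrite <- (length_seq n s) at 2. apply filter_length_le.
Qed.

Lemma count_range_mono P Q s n :
  (forall i, P i = true -> Q i = true) -> (count_range P s n <= count_range Q s n)%nat.
Proof.
  intro HPQ. unfold count_range. induction (seq s n) as [|a l IHl]; simpl; [lia|].
  destruct (P a) eqn:HPa; [rewrite (HPQ a HPa); simpl; lia|].
  destruct (Q a); simpl; lia.
Qed.

Lemma count_range_translate P Q s s' n :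
  (forall k, (k < n)%nat -> P (s + k)%nat = Q (s' + k)%nat) ->
  count_range P s n = count_range Q s' n.
Proof.
  induction n as [|n IHn]; intro HPQ; [reflexivity|].
  replace (S n) with (n + 1)%nat by lia.
  rewrite !count_range_add, IHn by (intros; apply HPQ; lia).
  unfold count_range; simpl. rewrite HPQ by lia. destruct (Q _); reflexivity.
Qed.

Lemma count_range_le_translate P Q s s' p m :
  (forall k, (k + m <= p)%nat -> P (s + k)%nat = Q (s' + k)%nat) ->
  (count_range P s p <= count_range Q s' p + m)%nat.
Proof.
  intro HPQ. destruct (le_lt_dec m p) as [Hmp|Hpm].
  2:{ pose proof (count_range_le P s p). lia. }
  replace p with (p - m + m)%nat by lia. rewrite !count_range_add.
  rewrite (count_range_translate P Q s s' (p - m)) by (intros; apply HPQ; lia).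
  pose proof (count_range_le P (s + (p - m)) m). lia.
Qed.

Lemma count_range_blocks P s p K d L :
  (forall q, (q < L)%nat ->
     (K <= count_range P (s + q * p) p + d)%nat /\
     (count_range P (s + q * p) p <= K + d)%nat) ->
  (L * K <= count_range P s (L * p) + L * d)%nat /\
  (count_range P s (L * p) <= L * K + L * d)%nat.
Proof.
  induction L as [|L IHL]; intro Hblock; [simpl; unfold count_range; simpl; lia|].
  replace (S L * p)%nat with (L * p + p)%nat by lia. rewrite count_range_add.
  destruct (Hblock L ltac:(lia)).
  destruct IHL as [IH1 IH2]; [intros; apply Hblock; lia|]. lia.
Qed.

Definition agreeb (x z : pt) (m i : nat) : bool :=
  forallb (fun j => Nat.eqb (x (i + j)%nat) (z (i + j)%nat)) (seq 0 m).

Lemma agreebP x z m i :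
  agreeb x z m i = true <-> (forall j, (j < m)%nat -> x (i + j)%nat = z (i + j)%nat).
Proof.
  unfold agreeb. rewrite forallb_forall. split.
  - intros H j Hj. apply Nat.eqb_eq, H, in_seq. lia.
  - intros H j Hj. apply in_seq in Hj. apply Nat.eqb_eq, H. lia.
Qed.

(* The test filtered in [Phi], so that [Phi x z t] is [freq (distb x z t)] by conversion. *)
Definition distb (x z : pt) (t : R) (i : nat) : bool :=
  if Rlt_dec (Defs.dist (shift_iter i x) (shift_iter i z)) t then true else false.

Lemma distb_of_agreeb x z m t i :
  / 2 ^ m < t -> agreeb x z m i = true -> distb x z t i = true.
Proof.
  intros Ht Hagree. rewrite agreebP in Hagree. unfold distb.
  destruct Rlt_dec as [|Hnlt]; [reflexivity|]. exfalso; apply Hnlt.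
  eapply Rle_lt_trans; [|exact Ht]. apply dist_le_of_agree.
  intros j Hj. rewrite !shift_iter_apply. auto.
Qed.

Lemma agreeb_of_distb x z m i : distb x z (/ 2 ^ m) i = true -> agreeb x z m i = true.
Proof.
  unfold distb. destruct Rlt_dec as [Hd|]; [intros _|discriminate].
  apply agreebP. intros j Hj. pose proof (agree_of_dist_lt m _ _ Hd j Hj) as Hj'.
  rewrite !shift_iter_apply in Hj'. exact Hj'.
Qed.

Definition freq (P : nat -> bool) (n : nat) : R := INR (count_range P 0 n) / INR n.

Lemma freq_bounds P n : 0 <= freq P n <= 1.
Proof.
  unfold freq. destruct n as [|n].
  { simpl. unfold Rdiv. rewrite Rinv_0, Rmult_0_r. lra. }
  pose proof (le_INR _ _ (count_range_le P 0 (S n))) as Hle.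
  pose proof (pos_INR (count_range P 0 (S n))).
  assert (Hn : 0 < INR (S n)) by (apply lt_0_INR; lia).
  split; [apply Rdiv_le_0_compat; lra | apply (Rdiv_le_1 _ _ Hn), Hle].
Qed.

Lemma freq_mono P Q n : (forall i, P i = true -> Q i = true) -> freq P n <= freq Q n.
Proof.
  intro HPQ. unfold freq, Rdiv. apply Rmult_le_compat_r.
  - destruct n; [simpl; rewrite Rinv_0; lra | left; apply Rinv_0_lt_compat, lt_0_INR; lia].
  - apply le_INR, count_range_mono, HPQ.
Qed.

Lemma Phi_le_freq_agreeb x z m n : Phi x z (/ 2 ^ m) n <= freq (agreeb x z m) n.
Proof. apply freq_mono. intro i. apply agreeb_of_distb. Qed.

Lemma freq_agreeb_le_Phi x z m t n :
  / 2 ^ m < t -> freq (agreeb x z m) n <= Phi x z t n.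
Proof. intro Ht. apply freq_mono. intro i. apply distb_of_agreeb, Ht. Qed.

Lemma Rabs_div_sub_le a b d E p : 0 < E -> 0 < p ->
  a * p <= (b + d) * E -> b * E <= a * p + d * E -> Rabs (a / E - b / p) <= d / p.
Proof.
  intros HE Hp Hup Hlo.
  replace (a / E - b / p) with ((a * p - b * E) / (E * p)) by (field; lra).
  replace (d / p) with (d * E / (E * p)) by (field; lra).
  assert (HEp : 0 < E * p) by nra.
  apply Rabs_le. unfold Rdiv. rewrite Ropp_mult_distr_l.
  split; apply Rmult_le_compat_r; try (left; apply Rinv_0_lt_compat, HEp); lra.
Qed.

(* The [2] in the error term pays for the prefix of length [s <= 2 * L]. *)
Lemma count_ratio_close (c K L s p m : nat) :
  (1 <= L)%nat -> (1 <= p)%nat -> (s <= 2 * L)%nat -> (K <= p)%nat ->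
  (L * K <= c + L * m)%nat -> (c <= s + L * K + L * m)%nat ->
  Rabs (INR c / INR (s + L * p) - INR K / INR p) <= INR (m + 2) / INR p.
Proof.
  intros HL Hp Hs HK Hlo Hup.
  apply Rabs_div_sub_le; try (apply lt_0_INR; nia).
  - rewrite <- plus_INR, <- !mult_INR. apply le_INR. nia.
  - rewrite <- !mult_INR, <- plus_INR. apply le_INR. nia.
Qed.

Definition repeats_on (x u : pt) (s p L : nat) : Prop :=
  forall q r, (q < L)%nat -> (r < p)%nat -> x (s + q * p + r)%nat = u r.

Section RepeatedBlocks.

Variables (x z u v : pt) (s p L : nat).
Hypotheses (Hx : repeats_on x u s p L) (Hz : repeats_on z v s p L).

Lemma agreeb_repeats m q k : (q < L)%nat -> (k + m <= p)%nat ->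
  agreeb x z m (s + q * p + k) = agreeb u v m k.
Proof.
  intros Hq Hk. apply Bool.eq_iff_eq_true. rewrite !agreebP.
  split; intros Hagree j Hj; specialize (Hagree j Hj).
  - rewrite <- Nat.add_assoc, Hx, Hz in Hagree by lia. exact Hagree.
  - rewrite <- Nat.add_assoc, Hx, Hz by lia. exact Hagree.
Qed.

Lemma count_agreeb_repeats m :
  let K := count_range (agreeb u v m) 0 p in
  (L * K <= count_range (agreeb x z m) 0 (s + L * p) + L * m)%nat /\
  (count_range (agreeb x z m) 0 (s + L * p) <= s + L * K + L * m)%nat.
Proof.
  intro K. rewrite count_range_add, Nat.add_0_l. pose proof (count_range_le (agreeb x z m) 0 s).
  destruct (count_range_blocks (agreeb x z m) s p K m L) as [Hge Hle]; [|lia].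
  intros q Hq. split; apply count_range_le_translate; intros k Hk;
    rewrite agreeb_repeats by lia; reflexivity.
Qed.

Lemma freq_agreeb_repeats_close m : (1 <= L)%nat -> (1 <= p)%nat -> (s <= 2 * L)%nat ->
  Rabs (freq (agreeb x z m) (s + L * p) - freq (agreeb u v m) p) <= INR (m + 2) / INR p.
Proof.
  intros HL Hp Hs. destruct (count_agreeb_repeats m) as [Hlo Hup].
  apply count_ratio_close; auto using count_range_le.
Qed.

End RepeatedBlocks.

Lemma LimInf_seq_eq_0 u : (forall n, 0 <= u n) ->
  (forall eps, 0 < eps -> forall N, exists n, (N <= n)%nat /\ u n < eps) ->
  LimInf_seq u = 0.
Proof.
  intros Hpos Hoften. apply is_LimInf_seq_unique. intro eps.
  pose proof (cond_pos eps). split.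
  - intro N. destruct (Hoften eps (cond_pos eps) N) as [n [HNn Hn]].
    exists n. split; [exact HNn | lra].
  - exists 0%nat. intros n _. specialize (Hpos n). lra.
Qed.

Lemma LimInf_seq_eq_0_often u : LimInf_seq u = 0 ->
  forall eps, 0 < eps -> forall N, exists n, (N <= n)%nat /\ u n < eps.
Proof.
  intros Hinf eps Heps N. destruct (ex_LimInf_seq u) as [l Hl].
  rewrite (is_LimInf_seq_unique _ _ Hl) in Hinf. subst l.
  destruct (Hl (mkposreal eps Heps)) as [Hoften _].
  destruct (Hoften N) as [n [HNn Hn]]. exists n. simpl in Hn. split; [exact HNn | lra].
Qed.

Lemma LimSup_seq_eq_1 u : (forall n, u n <= 1) ->
  (forall eps, 0 < eps -> forall N, exists n, (N <= n)%nat /\ 1 - eps < u n) ->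
  LimSup_seq u = 1.
Proof.
  intros Hle Hoften. apply is_LimSup_seq_unique. intro eps.
  pose proof (cond_pos eps). split.
  - exact (Hoften eps (cond_pos eps)).
  - exists 0%nat. intros n _. specialize (Hle n). lra.
Qed.

Lemma LimSup_seq_eq_1_often u : LimSup_seq u = 1 ->
  forall eps, 0 < eps -> forall N, exists n, (N <= n)%nat /\ 1 - eps < u n.
Proof.
  intros Hsup eps Heps. destruct (ex_LimSup_seq u) as [l Hl].
  rewrite (is_LimSup_seq_unique _ _ Hl) in Hsup. subst l.
  exact (proj1 (Hl (mkposreal eps Heps))).
Qed.

Lemma exists_inv_pow2_lt t : 0 < t -> exists m, / 2 ^ m < t.
Proof.
  intro Ht. destruct (pow_lt_1_zero (/ 2) ltac:(rewrite Rabs_pos_eq; lra) t Ht) as [m Hm].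
  exists m. specialize (Hm m (le_n _)). rewrite pow_inv, Rabs_pos_eq in Hm; [exact Hm|].
  left; apply Rinv_0_lt_compat, pow_lt; lra.
Qed.

Lemma div_INR_S_eventually_lt c eps : 0 < eps ->
  exists N, forall n, (N <= n)%nat -> c / INR (S n) < eps.
Proof.
  intro Heps. destruct (INR_unbounded (c / eps)) as [N HN]. exists N. intros n Hn.
  assert (Hpos : 0 < INR (S n)) by (apply lt_0_INR; lia).
  assert (INR N <= INR (S n)) by (apply le_INR; lia).
  apply Rlt_div_l; [lra|]. apply Rlt_div_l in HN; [|lra]. nra.
Qed.

Section Transfer.

Variables (x x' y y' : pt) (E : nat -> nat) (N0 : nat).
Hypothesis HE : forall n, (n <= E n)%nat.
Hypothesis Hclose : forall m n, (N0 <= n)%nat ->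
  Rabs (freq (agreeb x x' m) (E n) - freq (agreeb y y' m) (S n)) <= INR (m + 2) / INR (S n).

Lemma LimInf_Phi_transfer s : 0 < s -> LimInf_seq (Phi y y' s) = 0 ->
  exists s', 0 < s' /\ LimInf_seq (Phi x x' s') = 0.
Proof.
  intros Hs Hinf. destruct (exists_inv_pow2_lt s Hs) as [m Hm].
  exists (/ 2 ^ m). split; [apply Rinv_0_lt_compat, pow_lt; lra|].
  apply LimInf_seq_eq_0; [intro; apply freq_bounds|]. intros eps Heps N.
  destruct (div_INR_S_eventually_lt (INR (m + 2)) (eps / 2)) as [N1 HN1]; [lra|].
  destruct (LimInf_seq_eq_0_often _ Hinf (eps / 2) ltac:(lra) (S (max N (max N0 N1))))
    as [[|n] [Hn Hsmall]]; [lia|].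
  exists (E n). split; [specialize (HE n); lia|].
  specialize (Hclose m n ltac:(lia)). specialize (HN1 n ltac:(lia)).
  apply Rabs_le_between' in Hclose.
  pose proof (Phi_le_freq_agreeb x x' m (E n)).
  pose proof (freq_agreeb_le_Phi y y' m s (S n) Hm).
  lra.
Qed.

Lemma LimSup_Phi_transfer t : 0 < t ->
  (forall t', 0 < t' -> LimSup_seq (Phi y y' t') = 1) -> LimSup_seq (Phi x x' t) = 1.
Proof.
  intros Ht Hsup. destruct (exists_inv_pow2_lt t Ht) as [m Hm].
  specialize (Hsup (/ 2 ^ m) ltac:(apply Rinv_0_lt_compat, pow_lt; lra)).
  apply LimSup_seq_eq_1; [intro; apply freq_bounds|]. intros eps Heps N.
  destruct (div_INR_S_eventually_lt (INR (m + 2)) (eps / 2)) as [N1 HN1]; [lra|].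
  destruct (LimSup_seq_eq_1_often _ Hsup (eps / 2) ltac:(lra) (S (max N (max N0 N1))))
    as [[|n] [Hn Hlarge]]; [lia|].
  exists (E n). split; [specialize (HE n); lia|].
  specialize (Hclose m n ltac:(lia)). specialize (HN1 n ltac:(lia)).
  apply Rabs_le_between' in Hclose.
  pose proof (freq_agreeb_le_Phi x x' m t (E n) Hm).
  pose proof (Phi_le_freq_agreeb y y' m (S n)).
  lra.
Qed.

Lemma DC1_transfer : DC1 y y' -> DC1 x x'.
Proof.
  intros [[s [Hs Hinf]] Hsup]. split.
  - exact (LimInf_Phi_transfer s Hs Hinf).
  - intros t Ht. exact (LimSup_Phi_transfer t Ht Hsup).
Qed.

End Transfer.

Lemma length_concat_repeat (w : word) L : length (concat (repeat w L)) = (L * length w)%nat.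
Proof. induction L as [|L IHL]; simpl; [reflexivity|]. rewrite length_app, IHL. lia. Qed.

Lemma nth_concat_repeat (w : word) L q r : (q < L)%nat -> (r < length w)%nat ->
  nth (q * length w + r) (concat (repeat w L)) 0%nat = nth r w 0%nat.
Proof.
  revert q; induction L as [|L IHL]; intros [|q] Hq Hr; try lia; simpl.
  - rewrite app_nth1 by lia. reflexivity.
  - rewrite app_nth2 by lia.
    replace (length w + q * length w + r - length w)%nat with (q * length w + r)%nat by lia.
    apply IHL; lia.
Qed.

Lemma length_Yw y n : length (Yw y n) = n.
Proof. unfold Yw. rewrite length_map, length_seq. reflexivity. Qed.

Lemma nth_Yw y n r : (r < n)%nat -> nth r (Yw y n) 0%nat = y r.
Proof.
  intro Hr. unfold Yw.
  rewrite nth_indep with (d' := y 0%nat) by (rewrite length_map, length_seq; exact Hr).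
  rewrite map_nth, seq_nth by exact Hr. reflexivity.
Qed.

Section Construction.

Variables (C : nat -> word) (A1 : word).

Lemma length_Aw_indep y y' n : length (Aw C A1 y n) = length (Aw C A1 y' n).
Proof.
  induction n as [|n IHn]; simpl; [reflexivity|].
  rewrite !length_app, !length_concat_repeat, !length_Yw, IHn. reflexivity.
Qed.

Lemma length_Aw_pos y n : (1 <= length A1)%nat -> (1 <= length (Aw C A1 y n))%nat.
Proof. intro HA1. induction n; simpl; [exact HA1|]. rewrite !length_app. lia. Qed.

Lemma prefix_Aw_repeats (x y : pt) n : prefix_of (Aw C A1 y (S n)) x ->
  repeats_on x y (length (Aw C A1 y n) + length (C n)) (S n) (length (Aw C A1 y n) ^ 2).
Proof.
  intros Hpre q r Hq Hr. set (a := Aw C A1 y n) in *.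
  assert (Hqr : (q * S n + r < length a ^ 2 * S n)%nat) by nia.
  rewrite <- Hpre; cbn [Aw]; fold a.
  2:{ rewrite !length_app, length_concat_repeat, length_Yw. lia. }
  rewrite app_nth2 by lia.
  replace (length a + length (C n) + q * S n + r - length a)%nat
    with (length (C n) + (q * S n + r))%nat by lia.
  rewrite app_nth1 by (rewrite length_app, length_concat_repeat, length_Yw; lia).
  rewrite app_nth2, Nat.add_comm, Nat.add_sub by lia.
  rewrite <- (length_Yw y (S n)) at 1. rewrite nth_concat_repeat by (rewrite ?length_Yw; lia).
  apply nth_Yw, Hr.
Qed.

End Construction.

Lemma contained_nil k Pi : subshift k Pi -> contained Pi nil.
Proof.
  intros [[x Hx] _]. exists x. split; [exact Hx|]. intros i Hi. simpl in Hi. lia.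
Qed.

Theorem proposition3p7
  (k : nat) (Hk : (2 <= k)%nat)
  (Pi : pt -> Prop) (HPi : proper_subshift k Pi)
  (C : nat -> word)
  (HCin : forall n, contained Pi (C n))
  (HCall : forall w, contained Pi w -> exists n, C n = w)
  (HCinj : forall m n, C m = C n -> m = n)
  (A1 : word) (HA1k : List.Forall (fun a => (a < k)%nat) A1)
  (HA1 : ~ contained Pi A1)
  (Hlen : forall y, Pi y -> forall m : nat, exists N, forall n, (N <= n)%nat ->
            (m * length (C n) <= length (Aw C A1 y n))%nat)
  (T : pt -> pt)
  (HT : forall y, Pi y -> forall n, prefix_of (Aw C A1 y n) (T y))
  (y y' : pt) (Hy : Pi y) (Hy' : Pi y') :
  DC1 y y' -> DC1 (T y) (T y').
Proof.
  assert (HA1len : (1 <= length A1)%nat).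
  { destruct A1; [|simpl; lia]. exfalso. exact (HA1 (contained_nil k Pi (proj1 HPi))). }
  destruct (Hlen y Hy 1%nat) as [N0 HN0].
  set (a n := length (Aw C A1 y n)).
  assert (Ha : forall n, (1 <= a n)%nat) by (intro; apply length_Aw_pos, HA1len).
  (* [E n] is the end of the run of [a n ^ 2] copies of [Yw y (S n)] in [Aw C A1 y (S n)]. *)
  apply (DC1_transfer (T y) (T y') y y' (fun n => a n + length (C n) + a n ^ 2 * S n)%nat N0).
  - intro n. specialize (Ha n). rewrite Nat.pow_2_r. nia.
  - intros m n Hn. specialize (Ha n). specialize (HN0 n Hn). fold (a n) in HN0.
    apply freq_agreeb_repeats_close; try (rewrite ?Nat.pow_2_r; nia).
    + apply prefix_Aw_repeats, HT, Hy.
    + unfold a. rewrite (length_Aw_indep C A1 y y'). apply prefix_Aw_repeats, HT, Hy'.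
Qed.
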